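(* Let $(M,g)$ be a $6$-dimensional Einstein manifold. Then for all $i,j$, $$(-\tau|R|^2+4\mathring{R}-2\hat{R})g_{ij}+12\check{R}_{ij}+12\hat{R}_{ij}-24\mathring{R}_{ij}+4\tau R_{iabc}R_{jabc}=0.$$
   Context: Conventions: $R(X,Y)Z=[\nabla_X,\nabla_Y]Z-\nabla_{[X,Y]}Z$ for the Levi-Civita connection $\nabla$; components w.r.t. a local orthonormal frame, $R_{abcd}=g(R(e_a,e_b)e_c,e_d)$, $\rho_{ij}=R_{aija}$, $\tau=\rho_{aa}$, summation over repeated indices. Einstein means $\rho_{ij}=\frac{\tau}{\dim M}g_{ij}$. Notation: $|R|^2=R_{abcd}R_{abcd}$, $\hat R=R_{abcd}R_{abuv}R_{cduv}$, $\mathring R=R_{abcd}R_{aucv}R_{budv}$, $\check R_{ij}=R_{iuvj}R_{abcu}R_{abcv}$, $\hat R_{ij}=R_{ibac}R_{jbuv}R_{acuv}$, $\mathring R_{ij}=R_{iabc}R_{jubv}R_{aucv}$. *)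

(* Pointwise (algebraic) model of the Riemann curvature tensor
   of an n-dimensional Riemannian manifold, in components w.r.t. a local
   orthonormal frame e_1..e_n at a point: R_{abcd} = g(R(e_a,e_b)e_c,e_d). *)
From HB Require Import structures.
From mathcomp Require Import all_boot all_order all_algebra.
Set Implicit Arguments. Unset Strict Implicit. Unset Printing Implicit Defensive.
Import Order.TTheory GRing.Theory Num.Theory.
Local Open Scope ring_scope.

Definition tensor4 (R : realFieldType) (n : nat) := 'I_n -> 'I_n -> 'I_n -> 'I_n -> R.

Definition gmet (R : realFieldType) (n : nat) (i j : 'I_n) : R := (i == j)%:R.
Arguments gmet {R n} i j.

Definition curvature_tensor (R : realFieldType) (n : nat) (Rm : tensor4 R n) : Prop :=
  [/\ (forall a b c d, Rm a b c d = - Rm b a c d),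
      (forall a b c d, Rm a b c d = - Rm a b d c),
      (forall a b c d, Rm a b c d = Rm c d a b)
    & (forall a b c d, Rm a b c d + Rm b c a d + Rm c a b d = 0)].

Definition ricci (R : realFieldType) (n : nat) (Rm : tensor4 R n) (i j : 'I_n) : R :=
  \sum_(a < n) Rm a i j a.

Definition scal (R : realFieldType) (n : nat) (Rm : tensor4 R n) : R :=
  \sum_(a < n) ricci Rm a a.

Definition einstein (R : realFieldType) (n : nat) (Rm : tensor4 R n) : Prop :=
  forall i j, ricci Rm i j = scal Rm / n%:R * gmet i j.

Definition normsq (R : realFieldType) (n : nat) (Rm : tensor4 R n) : R :=
  \sum_(a < n) \sum_(b < n) \sum_(c < n) \sum_(d < n) Rm a b c d * Rm a b c d.

Definition Rhat (R : realFieldType) (n : nat) (Rm : tensor4 R n) : R :=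
  \sum_(a < n) \sum_(b < n) \sum_(c < n) \sum_(d < n) \sum_(u < n) \sum_(v < n)
    Rm a b c d * Rm a b u v * Rm c d u v.

Definition Rring (R : realFieldType) (n : nat) (Rm : tensor4 R n) : R :=
  \sum_(a < n) \sum_(b < n) \sum_(c < n) \sum_(d < n) \sum_(u < n) \sum_(v < n)
    Rm a b c d * Rm a u c v * Rm b u d v.

Definition Rcheck_ij (R : realFieldType) (n : nat) (Rm : tensor4 R n) (i j : 'I_n) : R :=
  \sum_(u < n) \sum_(v < n) \sum_(a < n) \sum_(b < n) \sum_(c < n)
    Rm i u v j * Rm a b c u * Rm a b c v.

Definition Rhat_ij (R : realFieldType) (n : nat) (Rm : tensor4 R n) (i j : 'I_n) : R :=
  \sum_(a < n) \sum_(b < n) \sum_(c < n) \sum_(u < n) \sum_(v < n)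
    Rm i b a c * Rm j b u v * Rm a c u v.

Definition Rring_ij (R : realFieldType) (n : nat) (Rm : tensor4 R n) (i j : 'I_n) : R :=
  \sum_(a < n) \sum_(b < n) \sum_(c < n) \sum_(u < n) \sum_(v < n)
    Rm i a b c * Rm j u b v * Rm a u c v.

Definition RR_ij (R : realFieldType) (n : nat) (Rm : tensor4 R n) (i j : 'I_n) : R :=
  \sum_(a < n) \sum_(b < n) \sum_(c < n) Rm i a b c * Rm j a b c.


(* The identity is cubic in the curvature components, whereas the symmetries of a
   curvature tensor and the Einstein condition are linear in them.  We write every
   component R_abcd as an integer combination of independent unknowns, first modulo
   the symmetries (sorted index pairs and the first Bianchi identity), then modulo the
   Einstein relations rho_ij = [i = j] rho_00, solved by integer Gaussian elimination.
   After this substitution each entry of the left-hand side is a polynomial with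
   integer coefficients in the unknowns, and its Ring_polynom normal form is zero. *)

From Stdlib Require Import ZArith Ring_polynom Ring_theory BinList.
From mathcomp Require Import all_boot all_order all_algebra.
From mathcomp.algebra_tactics Require Import common.
From mathcomp Require Import ring lra.
From mathcomp.zify Require Import ssrZ zify.
Import GRing.Theory Num.Theory.
Set Implicit Arguments. Unset Strict Implicit. Unset Printing Implicit Defensive.
Local Open Scope ring_scope.

Lemma nth_jump_succ (A : Type) (d : A) p (l : seq A) :
  BinList.nth d (Pos.succ p) l = BinList.nth d p (behead l).
Proof. by elim: p l => [p IH|p IH|] l //=; rewrite IH jump_succ /= -!jump_tl. Qed.

Lemma nth_of_succ_nat (A : Type) (d : A) n (l : seq A) :
  BinList.nth d (Pos.of_succ_nat n) l = nth d l n.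
Proof.
elim: n l => [|n IH] l; first by case: l.
by rewrite /= nth_jump_succ IH; case: l => [|x l] //=; rewrite nth_nil.
Qed.

Definition zpoly := Pol Z.
Definition zpoly0 : zpoly := Pc (0 : Z).
Definition zpoly_const (z : Z) : zpoly := Pc z.
Definition zpoly_add : zpoly -> zpoly -> zpoly := Padd (0 : Z) Z.add Zeq_bool.
Definition zpoly_mul : zpoly -> zpoly -> zpoly := Pmul (0 : Z) (1 : Z) Z.add Z.mul Zeq_bool.
Definition zpoly_eqb : zpoly -> zpoly -> bool := Peq Zeq_bool.
Definition zpoly_var (v : nat) : zpoly := mk_X (0 : Z) (1 : Z) (Pos.of_succ_nat v).
Definition zpoly_sum (n : nat) (F : nat -> zpoly) : zpoly :=
  foldr (fun a p => zpoly_add (F a) p) zpoly0 (iota 0 n).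

Section ZPolyEval.
Variables (R : comPzRingType) (x : seq R).

Definition zcast (z : Z) : R := (int_of_Z z)%:~R.
Definition zpoly_eval (p : zpoly) : R := Pphi 0 +%R *%R zcast x p.

Lemma zcast0 : zcast 0 = 0. Proof. by []. Qed.

Lemma zcast1 : zcast 1 = 1. Proof. by []. Qed.

Lemma zcastN1 : zcast (-1) = -1. Proof. by []. Qed.

Lemma zcastD a b : zcast (Z.add a b) = zcast a + zcast b.
Proof. by rewrite /zcast -intrD; congr (_ %:~R); lia. Qed.

Lemma zcastM a b : zcast (Z.mul a b) = zcast a * zcast b.
Proof. by rewrite /zcast -intrM; congr (_ %:~R); lia. Qed.

Lemma zcastN a : zcast (Z.opp a) = - zcast a.
Proof. by rewrite /zcast (_ : int_of_Z (Z.opp a) = - int_of_Z a) ?mulrNz //; lia. Qed.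

Let Rth := Rth_ARth (Eqsth R) (Eq_ext _ _ _) (RR R).

Lemma zpoly_evalD p q : zpoly_eval (zpoly_add p q) = zpoly_eval p + zpoly_eval q.
Proof. exact: (Padd_ok (Eqsth R) (Eq_ext _ _ _) Rth (RZ R)). Qed.

Lemma zpoly_evalM p q : zpoly_eval (zpoly_mul p q) = zpoly_eval p * zpoly_eval q.
Proof. exact: (Pmul_ok (Eqsth R) (Eq_ext _ _ _) Rth (RZ R)). Qed.

Lemma zpoly_eval_var v : zpoly_eval (zpoly_var v) = nth 0 x v.
Proof.
rewrite -nth_of_succ_nat; symmetry.
exact: (mkX_ok (Eqsth R) (Eq_ext _ _ _) Rth (RZ R)).
Qed.

Lemma zpoly_eval_const z : zpoly_eval (zpoly_const z) = zcast z.
Proof. by []. Qed.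

Lemma zpoly_eval_sum n F : zpoly_eval (zpoly_sum n F) = \sum_(a < n) zpoly_eval (F a).
Proof.
rewrite -(big_mkord xpredT (zpoly_eval \o F)) /zpoly_sum /index_iota subn0.
elim: (iota 0 n) => [|a s IH]; first by rewrite big_nil.
by rewrite /= zpoly_evalD IH big_cons.
Qed.

Lemma zpoly_eval_eq0 p : zpoly_eqb p zpoly0 -> zpoly_eval p = 0.
Proof. by move=> /(Peq_ok (Eqsth R) (Eq_ext _ _ _) (RZ R)) /(_ x); rewrite /zpoly_eval => ->. Qed.

End ZPolyEval.

Definition lform := seq (Z * nat).

Definition lform_scale (s : Z) (f : lform) : lform := [seq (Z.mul s t.1, t.2) | t <- f].
Arguments lform_scale : simpl never.

Definition lform_poly (f : lform) : zpoly :=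
  foldr (fun t p => zpoly_add (zpoly_mul (zpoly_const t.1) (zpoly_var t.2)) p) zpoly0 f.

Definition lcoef (v : nat) (f : lform) : Z :=
  foldr (fun t c => if t.2 == v then Z.add t.1 c else c) 0 f.

Definition lform_merge (f : lform) : lform := [seq (lcoef v f, v) | v <- undup (map snd f)].

Definition lcontent (f : lform) : Z := foldr (fun t g => Z.gcd t.1 g) 0 f.

Definition lform_primitive (f : lform) : lform :=
  let g := lcontent f in if Z.eqb g 0 then f else [seq (Z.div t.1 g, t.2) | t <- f].

Definition lform_subst (s : nat * lform) (f : lform) : lform :=
  flatten [seq if t.2 == s.1 then lform_scale t.1 s.2 else [:: t] | t <- f].

Definition lform_substs (S : seq (nat * lform)) (f : lform) : lform :=
  foldl (fun f s => lform_subst s f) f S.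

Definition lpivot (f : lform) : option nat :=
  ohead [seq v <- map snd f | Z.eqb (Z.abs (lcoef v f)) 1].

(* A step of integer Gaussian elimination.  Dividing by the content matters: in
   dimension six, once reduced, one Einstein relation among sectional curvatures has
   only even coefficients. *)
Definition elim_step (S : seq (nat * lform)) (r : lform) : seq (nat * lform) :=
  let r := lform_primitive (lform_merge (lform_substs S r)) in
  if lpivot r is Some v then
    rcons S (v, lform_scale (Z.opp (lcoef v r)) [seq t <- r | t.2 != v])
  else S.

Definition elim_substs (rels : seq lform) : seq (nat * lform) := foldl elim_step [::] rels.

Section LinearForms.
Variables (R : comPzRingType) (x : seq R).

Definition leval (f : lform) : R := \sum_(t <- f) zcast R t.1 * nth 0 x t.2.

Definition subst_ok (s : nat * lform) : bool := nth 0 x s.1 == leval s.2.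

Lemma zpoly_eval_lform f : zpoly_eval x (lform_poly f) = leval f.
Proof.
elim: f => [|t f IH]; first by rewrite /leval big_nil.
by rewrite /= zpoly_evalD zpoly_evalM zpoly_eval_var IH /leval big_cons.
Qed.

Lemma leval_cat f g : leval (f ++ g) = leval f + leval g.
Proof. by rewrite /leval big_cat. Qed.

Lemma leval_scale s f : leval (lform_scale s f) = zcast R s * leval f.
Proof.
by rewrite /leval big_map mulr_sumr; apply: eq_bigr => t _; rewrite zcastM mulrA.
Qed.

Lemma leval_flatten (T : Type) (F : T -> lform) (s : seq T) :
  leval (flatten [seq F i | i <- s]) = \sum_(i <- s) leval (F i).
Proof.
elim: s => [|i s IH]; first by rewrite /leval !big_nil.
by rewrite /= leval_cat IH big_cons.
Qed.

Lemma leval_lcoef v f :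
  leval f = zcast R (lcoef v f) * nth 0 x v + leval [seq t <- f | t.2 != v].
Proof.
elim: f => [|t f IH]; first by rewrite /leval !big_nil zcast0 mul0r add0r.
rewrite /= /leval big_cons -/(leval f) IH; case: eqP => [<-|_].
  by rewrite zcastD mulrDl addrA.
by rewrite big_cons addrCA.
Qed.

Lemma lcoef_filter v w f : w != v -> lcoef w [seq t <- f | t.2 != v] = lcoef w f.
Proof.
move=> wNv; elim: f => //= t f IH; case: (eqVneq t.2 v) => [tv|tNv] /=; last by rewrite IH.
by rewrite IH tv eq_sym (negbTE wNv).
Qed.

Lemma leval_lcoef_seq vs f : uniq vs -> {subset map snd f <= vs} ->
  leval f = \sum_(v <- vs) zcast R (lcoef v f) * nth 0 x v.
Proof.
elim: vs f => [|v vs IH] f /=.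
  case: f => [_ _|t f _ /(_ t.2 (mem_head _ _))] //.
  by rewrite /leval !big_nil.
case/andP=> vNvs Hu Hf; rewrite big_cons (leval_lcoef v f); congr (_ + _).
rewrite (IH _ Hu); last first.
  move=> w /mapP[t]; rewrite mem_filter => /andP[tNv tf] ->.
  by have := Hf t.2 (map_f _ tf); rewrite inE (negbTE tNv).
apply: eq_big_seq => w wvs; rewrite lcoef_filter //.
by apply: contraNneq vNvs => <-.
Qed.

Lemma leval_merge f : leval (lform_merge f) = leval f.
Proof.
rewrite [RHS](@leval_lcoef_seq (undup (map snd f))) ?undup_uniq //.
  by rewrite /lform_merge /leval big_map.
by move=> v; rewrite mem_undup.
Qed.

Lemma leval_subst s f : subst_ok s -> leval (lform_subst s f) = leval f.
Proof.
move=> /eqP xs; rewrite /lform_subst leval_flatten /leval; apply: eq_bigr => t _.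
case: eqP => [->|_]; last by rewrite big_seq1.
by rewrite -/(leval _) leval_scale xs.
Qed.

Lemma leval_substs S f : all subst_ok S -> leval (lform_substs S f) = leval f.
Proof.
elim: S f => //= s S IH f /andP[sok Sok].
by rewrite IH // leval_subst.
Qed.

Lemma subst_ok_pivot v f : leval f = 0 -> Z.abs (lcoef v f) = (1 : Z) ->
  subst_ok (v, lform_scale (Z.opp (lcoef v f)) [seq t <- f | t.2 != v]).
Proof.
move=> f0 c1; rewrite /subst_ok /= leval_scale zcastN.
have cc : zcast R (lcoef v f) * zcast R (lcoef v f) = 1.
  by rewrite -zcastM (_ : Z.mul _ _ = (1 : Z)) //; lia.
move: f0; rewrite (leval_lcoef v) => /eqP; rewrite addr_eq0 => /eqP cx.
by apply/eqP; rewrite -[nth 0 x v]mul1r -cc -mulrA cx mulrN mulNr.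
Qed.

End LinearForms.

Lemma lpivot_coef f v : lpivot f = Some v -> Z.abs (lcoef v f) = (1 : Z).
Proof.
rewrite /lpivot; set s := filter _ _.
have : all (fun v => Z.eqb (Z.abs (lcoef v f)) 1) s by apply: filter_all.
by case: s => //= w s /andP[/Z.eqb_eq w1 _] [<-].
Qed.

Section Elimination.
Variables (R : numDomainType) (x : seq R).

Lemma zcast_eq0 z : (zcast R z == 0) = Z.eqb z 0.
Proof. by rewrite /zcast intr_eq0; apply/eqP/idP; lia. Qed.

Lemma lcontent_dvd f t : t \in f -> Z.divide (lcontent f) t.1.
Proof.
elim: f => //= s f IH; rewrite inE => /orP[/eqP ->|tf].
  exact: Z.gcd_divide_l.
exact: Z.divide_trans (Z.gcd_divide_r _ _) (IH tf).
Qed.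

Lemma leval_primitive_eq0 f : leval x f = 0 -> leval x (lform_primitive f) = 0.
Proof.
rewrite /lform_primitive; case: ifP => // /negbT gN0.
have -> : leval x f = zcast R (lcontent f) * leval x [seq (Z.div t.1 (lcontent f), t.2) | t <- f].
  rewrite /leval big_map mulr_sumr; apply: eq_big_seq => t tf.
  rewrite mulrA -zcastM; congr (zcast R _ * _).
  case: (lcontent_dvd tf) => k ->; rewrite Z.div_mul; first exact: Z.mul_comm.
  exact/Z.eqb_neq/negbTE.
by move/eqP; rewrite mulf_eq0 zcast_eq0 (negbTE gN0) => /eqP.
Qed.

Lemma elim_step_ok S r :
  all (subst_ok x) S -> leval x r = 0 -> all (subst_ok x) (elim_step S r).
Proof.
move=> Sok r0; rewrite /elim_step; set r' := lform_primitive _.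
have r'0 : leval x r' = 0 by rewrite leval_primitive_eq0 // leval_merge leval_substs.
case E: (lpivot r') => [v|] //.
by rewrite all_rcons Sok andbT subst_ok_pivot // lpivot_coef.
Qed.

Lemma elim_substs_ok rels :
  all (fun r => leval x r == 0) rels -> all (subst_ok x) (elim_substs rels).
Proof.
rewrite /elim_substs; have : all (subst_ok x) [::] by [].
elim: rels [::] => //= r rels IH S Sok /andP[/eqP r0 rels0].
by apply: IH => //; apply: elim_step_ok.
Qed.

End Elimination.

Lemma divn_digit n x d : (d < n)%N -> ((x * n + d) %/ n)%N = x.
Proof. by move=> dn; rewrite divnMDl ?divn_small ?addn0 //; apply: leq_ltn_trans dn. Qed.

Lemma modn_digit n x d : (d < n)%N -> ((x * n + d) %% n)%N = d.
Proof. by move=> dn; rewrite modnMDl modn_small. Qed.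

Lemma digit_lt n x d p : (x < p)%N -> (d < n)%N -> (x * n + d < p * n)%N.
Proof. by move=> xp dn; rewrite -ltn_subRL -mulnBl (leq_trans dn) // leq_pmull // subn_gt0. Qed.

Section Indices.
Variable n : nat.

Definition comp_index (a b c d : nat) : nat := (((a * n + b) * n + c) * n + d)%N.

Definition comp_canon (a b c d : nat) : Z * (nat * nat * nat * nat) :=
  let s := Z.mul (if (a < b)%N then 1 else -1) (if (c < d)%N then 1 else -1) in
  let: (a, b, c, d) := (minn a b, maxn a b, minn c d, maxn c d) in
  if (a < c)%N || (a == c) && (b <= d)%N then (s, (a, b, c, d)) else (s, (c, d, a, b)).

(* The components surviving [comp_canon] minus those with a < c < d < b,
   which the first Bianchi identity writes as R_adcb - R_acdb, form a basis. *)
Definition bianchi_form (q : nat * nat * nat * nat) : lform :=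
  let: (a, b, c, d) := q in
  if [&& a < c, c < d & d < b]%N then [:: (1, comp_index a d c b); (-1, comp_index a c d b)]
  else [:: (1, comp_index a b c d)].

Definition comp_form (a b c d : nat) : lform :=
  if (a == b) || (c == d) then [::] else
  let: (s, q) := comp_canon a b c d in lform_scale s (bianchi_form q).

Definition ricci_form (i j : nat) : lform := flatten [seq comp_form a i j a | a <- iota 0 n].

Definition einstein_rel (i j : nat) : lform :=
  ricci_form i j ++ (if i == j then lform_scale (-1) (ricci_form 0 0) else [::]).

Definition einstein_rels : seq lform := [seq einstein_rel i j | i <- iota 0 n, j <- iota 0 n].

Definition einstein_substs : seq (nat * lform) := elim_substs einstein_rels.

Definition comp_poly (S : seq (nat * lform)) (a b c d : nat) : zpoly :=
  lform_poly (lform_substs S (comp_form a b c d)).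

Definition comp_table : seq (seq (seq (seq zpoly))) :=
  let S := einstein_substs in
  [seq [seq [seq [seq comp_poly S a b c d | d <- iota 0 n] | c <- iota 0 n]
    | b <- iota 0 n] | a <- iota 0 n].

Definition table_entry (t : seq (seq (seq (seq zpoly)))) (a b c d : nat) : zpoly :=
  nth zpoly0 (nth [::] (nth [::] (nth [::] t a) b) c) d.

Lemma table_entryE a b c d : (a < n)%N -> (b < n)%N -> (c < n)%N -> (d < n)%N ->
  table_entry comp_table a b c d = comp_poly einstein_substs a b c d.
Proof.
by move=> *; rewrite /table_entry /comp_table !(nth_map 0%N) ?size_iota ?nth_iota.
Qed.

End Indices.

Section Components.
Variables (R : realFieldType) (m : nat) (Rm : tensor4 R m.+1).
Local Notation n := m.+1.

Definition comp (a b c d : nat) : R := Rm (inord a) (inord b) (inord c) (inord d).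

Definition comp_env : seq R :=
  mkseq (fun k => comp (k %/ n %/ n %/ n) (k %/ n %/ n %% n) (k %/ n %% n) (k %% n))%N (n ^ 4).

Lemma nth_comp_env a b c d : (a < n)%N -> (b < n)%N -> (c < n)%N -> (d < n)%N ->
  nth 0 comp_env (comp_index n a b c d) = comp a b c d.
Proof.
move=> an bn cn dn; rewrite /comp_index nth_mkseq; last first.
  by rewrite !expnS expn0 muln1 !mulnA !digit_lt.
by rewrite !divn_digit ?modn_digit.
Qed.

Hypothesis Rm_curv : curvature_tensor Rm.

Lemma compNl a b c d : comp a b c d = - comp b a c d.
Proof. by case: Rm_curv => h _ _ _; apply: h. Qed.
Lemma compNr a b c d : comp a b c d = - comp a b d c.
Proof. by case: Rm_curv => _ h _ _; apply: h. Qed.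
Lemma comp_swap a b c d : comp a b c d = comp c d a b.
Proof. by case: Rm_curv => _ _ h _; apply: h. Qed.
Lemma comp_bianchi a b c d : comp a b c d + comp b c a d + comp c a b d = 0.
Proof. by case: Rm_curv => _ _ _ h; apply: h. Qed.

Lemma leval_bianchi_form a b c d : (a < n)%N -> (b < n)%N -> (c < n)%N -> (d < n)%N ->
  leval comp_env (bianchi_form n (a, b, c, d)) = comp a b c d.
Proof.
move=> an bn cn dn; rewrite /bianchi_form /leval.
case: ifP => _; last by rewrite big_seq1 nth_comp_env ?mul1r.
rewrite big_cons big_seq1 !nth_comp_env //= mul1r mulN1r.
have := comp_bianchi a c d b; have := comp_swap c d a b; have := compNl d a c b; lra.
Qed.

Lemma leval_comp_form a b c d : (a < n)%N -> (b < n)%N -> (c < n)%N -> (d < n)%N ->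
  leval comp_env (comp_form n a b c d) = comp a b c d.
Proof.
move=> an bn cn dn; rewrite /comp_form /comp_canon.
have [->|aNb] := eqVneq a b.
  by rewrite /= /leval big_nil; have := compNl b b c d; lra.
have [->|cNd] := eqVneq c d.
  by rewrite orbT /= /leval big_nil; have := compNr a b d d; lra.
have := compNl a b c d; have := compNr a b c d; have := compNr b a c d.
have := comp_swap a b c d; have := comp_swap b a c d; have := comp_swap a b d c.
have := comp_swap b a d c; have := compNl a b d c.
rewrite /=; case: (ltngtP a b) aNb => // ab _; case: (ltngtP c d) cNd => // cd _ *;
  case: ifP => _; rewrite leval_scale zcastM leval_bianchi_form // ?zcast1 ?zcastN1; lra.
Qed.

Lemma leval_ricci_form i j : (i < n)%N -> (j < n)%N ->
  leval comp_env (ricci_form n i j) = ricci Rm (inord i) (inord j).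
Proof.
move=> i_n j_n; rewrite leval_flatten /ricci.
rewrite (eq_bigr (fun a : 'I_n => comp a i j a)) => [|a _]; last by rewrite /comp inord_val.
rewrite -(big_mkord xpredT (fun a => comp a i j a)) /index_iota subn0.
rewrite big_seq [RHS]big_seq; apply: eq_bigr => a; rewrite mem_iota add0n => /andP[_ an].
exact: leval_comp_form.
Qed.

Hypothesis Rm_einstein : einstein Rm.

Lemma einstein_rels_eq0 : all (fun r => leval comp_env r == 0) (einstein_rels n).
Proof.
apply/allP => _ /allpairsP[[i j] [i_n j_n ->]].
move: i_n j_n; rewrite !mem_iota !add0n => /andP[_ i_n] /andP[_ j_n] /=.
rewrite /einstein_rel leval_cat leval_ricci_form // Rm_einstein /gmet.
rewrite -(inj_eq val_inj) /= !inordK //; case: (@eqP _ i j) => [ij|_].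
  by subst j; rewrite leval_scale leval_ricci_form // Rm_einstein /gmet eqxx zcastN1 mulN1r subrr.
by rewrite /leval big_nil mulr0 addr0.
Qed.

Lemma zpoly_eval_comp_poly (a b c d : 'I_n) :
  zpoly_eval comp_env (comp_poly n (einstein_substs n) a b c d) = Rm a b c d.
Proof.
rewrite zpoly_eval_lform leval_substs; last exact/elim_substs_ok/einstein_rels_eq0.
by rewrite leval_comp_form // /comp !inord_val.
Qed.

End Components.

Definition identity_comb (sc ns rr rh ch hh ri rrij : zpoly) (g : Z) : zpoly :=
  let lin c p := zpoly_mul (zpoly_const c) p in
  zpoly_add
    (zpoly_mul (zpoly_add (zpoly_add (lin (-1) (zpoly_mul sc ns)) (lin 4 rr)) (lin (-2) rh))
               (zpoly_const g))
    (zpoly_add (lin 12 ch)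
      (zpoly_add (lin 12 hh) (zpoly_add (lin (-24) ri) (lin 4 (zpoly_mul sc rrij))))).

Lemma zpoly_eval_identity_comb (R : comPzRingType) (x : seq R) sc ns rr rh ch hh ri rrij g :
  zpoly_eval x (identity_comb sc ns rr rh ch hh ri rrij g) =
    (- zpoly_eval x sc * zpoly_eval x ns + 4 * zpoly_eval x rr - 2 * zpoly_eval x rh) * zcast R g
    + 12 * zpoly_eval x ch + 12 * zpoly_eval x hh - 24 * zpoly_eval x ri
    + 4 * zpoly_eval x sc * zpoly_eval x rrij.
Proof.
rewrite /identity_comb !(zpoly_evalD, zpoly_evalM, zpoly_eval_const).
rewrite /zcast (_ : int_of_Z 4 = 4) // (_ : int_of_Z 12 = 12) // (_ : int_of_Z (-2) = - 2) //.
rewrite (_ : int_of_Z (-24) = - 24) // (_ : int_of_Z (-1) = - 1) //.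
ring.
Qed.

Section InvariantPolys.
Variables (n : nat) (T : nat -> nat -> nat -> nat -> zpoly).

Local Notation psum := (zpoly_sum n).

Definition scal_poly : zpoly := psum (fun a => psum (fun b => T b a a b)).

Definition normsq_poly : zpoly :=
  psum (fun a => psum (fun b => psum (fun c => psum (fun d =>
    zpoly_mul (T a b c d) (T a b c d))))).

Definition Rhat_poly : zpoly :=
  psum (fun a => psum (fun b => psum (fun c => psum (fun d =>
    zpoly_mul (T a b c d) (psum (fun u => psum (fun v =>
      zpoly_mul (T a b u v) (T c d u v)))))))).

Definition Rring_poly : zpoly :=
  psum (fun a => psum (fun b => psum (fun c => psum (fun d =>
    zpoly_mul (T a b c d) (psum (fun u => psum (fun v =>
      zpoly_mul (T a u c v) (T b u d v)))))))).

Definition Rcheck_ij_poly (i j : nat) : zpoly :=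
  psum (fun u => psum (fun v =>
    zpoly_mul (T i u v j) (psum (fun a => psum (fun b => psum (fun c =>
      zpoly_mul (T a b c u) (T a b c v))))))).

Definition Rhat_ij_poly (i j : nat) : zpoly :=
  psum (fun a => psum (fun b => psum (fun c =>
    zpoly_mul (T i b a c) (psum (fun u => psum (fun v =>
      zpoly_mul (T j b u v) (T a c u v))))))).

Definition Rring_ij_poly (i j : nat) : zpoly :=
  psum (fun a => psum (fun b => psum (fun c =>
    zpoly_mul (T i a b c) (psum (fun u => psum (fun v =>
      zpoly_mul (T j u b v) (T a u c v))))))).

Definition RR_ij_poly (i j : nat) : zpoly :=
  psum (fun a => psum (fun b => psum (fun c => zpoly_mul (T i a b c) (T j a b c)))).

(* The scalar invariants are arguments so that they are computed once for all (i, j). *)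
Definition identity_poly (sc ns rr rh : zpoly) (i j : nat) : zpoly :=
  identity_comb sc ns rr rh (Rcheck_ij_poly i j) (Rhat_ij_poly i j) (Rring_ij_poly i j)
    (RR_ij_poly i j) (if i == j then 1 else 0).

End InvariantPolys.

Definition identity_check (n : nat) (t : seq (seq (seq (seq zpoly)))) : bool :=
  let T := table_entry t in
  let sc := scal_poly n T in let ns := normsq_poly n T in
  let rr := Rring_poly n T in let rh := Rhat_poly n T in
  all (fun i => all (fun j => zpoly_eqb (identity_poly n T sc ns rr rh i j) zpoly0) (iota 0 n))
    (iota 0 n).

Section InvariantEval.
Variables (R : realFieldType) (x : seq R) (n : nat) (Rm : tensor4 R n).
Variable T : nat -> nat -> nat -> nat -> zpoly.
Hypothesis T_eval : forall a b c d : 'I_n, zpoly_eval x (T a b c d) = Rm a b c d.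

Ltac sum_congr := rewrite zpoly_eval_sum; apply: eq_bigr => ? _.
Ltac inner_sum := rewrite zpoly_eval_sum mulr_sumr; apply: eq_bigr => ? _.

Lemma zpoly_eval_scal : zpoly_eval x (scal_poly n T) = scal Rm.
Proof. by do 2 sum_congr; rewrite T_eval. Qed.

Lemma zpoly_eval_normsq : zpoly_eval x (normsq_poly n T) = normsq Rm.
Proof. by do 4 sum_congr; rewrite zpoly_evalM T_eval. Qed.

Lemma zpoly_eval_Rhat : zpoly_eval x (Rhat_poly n T) = Rhat Rm.
Proof.
do 4 sum_congr; rewrite zpoly_evalM T_eval.
by do 2 inner_sum; rewrite zpoly_evalM !T_eval mulrA.
Qed.

Lemma zpoly_eval_Rring : zpoly_eval x (Rring_poly n T) = Rring Rm.
Proof.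
do 4 sum_congr; rewrite zpoly_evalM T_eval.
by do 2 inner_sum; rewrite zpoly_evalM !T_eval mulrA.
Qed.

Lemma zpoly_eval_Rcheck_ij (i j : 'I_n) : zpoly_eval x (Rcheck_ij_poly n T i j) = Rcheck_ij Rm i j.
Proof.
do 2 sum_congr; rewrite zpoly_evalM T_eval.
by do 3 inner_sum; rewrite zpoly_evalM !T_eval mulrA.
Qed.

Lemma zpoly_eval_Rhat_ij (i j : 'I_n) : zpoly_eval x (Rhat_ij_poly n T i j) = Rhat_ij Rm i j.
Proof.
do 3 sum_congr; rewrite zpoly_evalM T_eval.
by do 2 inner_sum; rewrite zpoly_evalM !T_eval mulrA.
Qed.

Lemma zpoly_eval_Rring_ij (i j : 'I_n) : zpoly_eval x (Rring_ij_poly n T i j) = Rring_ij Rm i j.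
Proof.
do 3 sum_congr; rewrite zpoly_evalM T_eval.
by do 2 inner_sum; rewrite zpoly_evalM !T_eval mulrA.
Qed.

Lemma zpoly_eval_RR_ij (i j : 'I_n) : zpoly_eval x (RR_ij_poly n T i j) = RR_ij Rm i j.
Proof. by do 3 sum_congr; rewrite zpoly_evalM !T_eval. Qed.

Lemma zpoly_eval_identity (i j : 'I_n) :
  zpoly_eval x
    (identity_poly n T (scal_poly n T) (normsq_poly n T) (Rring_poly n T) (Rhat_poly n T) i j) =
    (- scal Rm * normsq Rm + 4 * Rring Rm - 2 * Rhat Rm) * gmet i j
    + 12 * Rcheck_ij Rm i j + 12 * Rhat_ij Rm i j - 24 * Rring_ij Rm i j
    + 4 * scal Rm * RR_ij Rm i j.
Proof.
rewrite /identity_poly zpoly_eval_identity_comb.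
rewrite zpoly_eval_scal zpoly_eval_normsq zpoly_eval_Rring zpoly_eval_Rhat.
rewrite zpoly_eval_Rcheck_ij zpoly_eval_Rhat_ij zpoly_eval_Rring_ij zpoly_eval_RR_ij.
by rewrite /gmet -[i == j]/((i : nat) == j); case: (_ == _).
Qed.

End InvariantEval.

Lemma identity_check_dim6 : identity_check 6 (comp_table 6).
Proof. by vm_compute. Qed.

Unset Implicit Arguments.

Theorem corollary3p3 (R : realFieldType) (Rm : tensor4 R 6) :
  curvature_tensor Rm -> einstein Rm ->
  forall i j : 'I_6,
    (- scal Rm * normsq Rm + 4 * Rring Rm - 2 * Rhat Rm) * gmet i j
    + 12 * Rcheck_ij Rm i j + 12 * Rhat_ij Rm i j - 24 * Rring_ij Rm i j
    + 4 * scal Rm * RR_ij Rm i j = 0.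
Proof.
move=> Rm_curv Rm_einstein i j.
have T_eval (a b c d : 'I_6) :
    zpoly_eval (comp_env Rm) (table_entry (comp_table 6) a b c d) = Rm a b c d.
  by rewrite table_entryE // zpoly_eval_comp_poly.
rewrite -(zpoly_eval_identity T_eval) zpoly_eval_eq0 //.
have iota6 (k : 'I_6) : (k : nat) \in iota 0 6 by rewrite mem_iota ltn_ord.
have := identity_check_dim6; rewrite /identity_check.
by move=> /allP/(_ i (iota6 i)) /allP/(_ j (iota6 j)).
Qed.
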